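(* Let $M^2$ be a minimal surface of general type in $\mathbb R^4$, parameterized by semi-canonical parameters $(u,v)$, and satisfying $\gamma_1=0$ identically. Then the function $G\sqrt{|\mu^2-\nu^2|}$ does not depend on $u$.
   Context: $\mathbb R^4$ carries the standard metric $g=\langle\cdot,\cdot\rangle$ and flat connection $\nabla'$; everything is smooth and local. For a regular surface $M^2: z=z(u,v)$ let $E,F,G$ be the first fundamental form coefficients, $\sigma$ the second fundamental form, $K$ the Gauss curvature, and $\varkappa$ the curvature of the normal connection, $\varkappa=g(R^\perp(x,y)n_2,n_1)$ for a positively oriented orthonormal frame $(x,y,n_1,n_2)$ with $x,y$ tangent. Minimal means $\sigma(x,x)+\sigma(y,y)=0$ for orthonormal tangent $x,y$. A minimal surface is of general type if $K^2-\varkappa^2>0$ and $\varkappa\neq0$ everywhere. The ellipse of curvature at $p$ is $\{\sigma(v,v): v\in T_pM^2,\ |v|=1\}$; a tangent line is canonical if it is collinear with an axis of this ellipse. The geometric frame is a positively oriented orthonormal frame $\{x,y,n_1,n_2\}$ with $x,y$ canonical tangent fields and $n_1,n_2$ normal, satisfying $\nabla'_xx=\gamma_1y+\nu n_1$, $\nabla'_xy=-\gamma_1x+\mu n_2$, $\nabla'_yx=-\gamma_2y+\mu n_2$, $\nabla'_yy=\gamma_2x-\nu n_1$, $\nabla'_xn_1=-\nu x+\beta_1n_2$, $\nabla'_yn_1=\nu y+\beta_2n_2$, $\nabla'_xn_2=-\mu y-\beta_1n_1$, $\nabla'_yn_2=-\mu x-\beta_2n_1$, with $\mu>0$, $\nu\ne0$,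 $\mu^2\ne\nu^2$; the functions $\nu,\mu,\gamma_1,\gamma_2,\beta_1,\beta_2$ are the invariants of $M^2$. Parameters $(u,v)$ are semi-canonical if the parametric lines are integral curves of the canonical tangents, with $F=0$, $x=z_u/\sqrt E$, $y=z_v/\sqrt G$; then $\gamma_1=-y(\ln\sqrt E)$, $\gamma_2=-x(\ln\sqrt G)$. *)

From Stdlib Require Import Reals Lra.
Open Scope R_scope.

Record vec4 := mkV { c0 : R; c1 : R; c2 : R; c3 : R }.

Definition vadd (a b : vec4) : vec4 :=
  mkV (c0 a + c0 b) (c1 a + c1 b) (c2 a + c2 b) (c3 a + c3 b).
Definition vscale (k : R) (a : vec4) : vec4 :=
  mkV (k * c0 a) (k * c1 a) (k * c2 a) (k * c3 a).
Definition vopp (a : vec4) : vec4 := vscale (-1) a.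
Definition dot (a b : vec4) : R :=
  c0 a * c0 b + c1 a * c1 b + c2 a * c2 b + c3 a * c3 b.

Definition det3 (a11 a12 a13 a21 a22 a23 a31 a32 a33 : R) : R :=
  a11 * (a22 * a33 - a23 * a32) - a12 * (a21 * a33 - a23 * a31)
  + a13 * (a21 * a32 - a22 * a31).

Definition det4 (a b c d : vec4) : R :=
    c0 a * det3 (c1 b) (c1 c) (c1 d) (c2 b) (c2 c) (c2 d) (c3 b) (c3 c) (c3 d)
  - c0 b * det3 (c1 a) (c1 c) (c1 d) (c2 a) (c2 c) (c2 d) (c3 a) (c3 c) (c3 d)
  + c0 c * det3 (c1 a) (c1 b) (c1 d) (c2 a) (c2 b) (c2 d) (c3 a) (c3 b) (c3 d)
  - c0 d * det3 (c1 a) (c1 b) (c1 c) (c2 a) (c2 b) (c2 c) (c3 a) (c3 b) (c3 c).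

Definition scal2 := R -> R -> R.
Definition vfield := R -> R -> vec4.
Definition domain := R -> R -> Prop.

Definition open_dom (U : domain) : Prop :=
  forall u v, U u v -> exists r, 0 < r /\
    forall a b, Rabs (a - u) < r -> Rabs (b - v) < r -> U a b.

Definition cont2_on (U : domain) (f : scal2) : Prop :=
  forall u v, U u v -> forall eps, 0 < eps -> exists d, 0 < d /\
    forall a b, U a b -> Rabs (a - u) < d -> Rabs (b - v) < d ->
      Rabs (f a b - f u v) < eps.

Definition is_du (U : domain) (f fu : scal2) : Prop :=
  forall u v, U u v -> derivable_pt_lim (fun t => f t v) u (fu u v).
Definition is_dv (U : domain) (f fv : scal2) : Prop :=
  forall u v, U u v -> derivable_pt_lim (fun t => f u t) v (fv u v).

Fixpoint Ck (k : nat) (U : domain) (f : scal2) : Prop :=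
  match k with
  | O => cont2_on U f
  | S k' => cont2_on U f /\ exists fu fv,
      is_du U f fu /\ is_dv U f fv /\ Ck k' U fu /\ Ck k' U fv
  end.
Definition smooth (U : domain) (f : scal2) : Prop := forall k, Ck k U f.

Definition comp0 (X : vfield) : scal2 := fun u v => c0 (X u v).
Definition comp1 (X : vfield) : scal2 := fun u v => c1 (X u v).
Definition comp2 (X : vfield) : scal2 := fun u v => c2 (X u v).
Definition comp3 (X : vfield) : scal2 := fun u v => c3 (X u v).

Definition vsmooth (U : domain) (X : vfield) : Prop :=
  smooth U (comp0 X) /\ smooth U (comp1 X) /\
  smooth U (comp2 X) /\ smooth U (comp3 X).

Definition vis_du (U : domain) (X D : vfield) : Prop :=
  is_du U (comp0 X) (comp0 D) /\ is_du U (comp1 X) (comp1 D) /\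
  is_du U (comp2 X) (comp2 D) /\ is_du U (comp3 X) (comp3 D).
Definition vis_dv (U : domain) (X D : vfield) : Prop :=
  is_dv U (comp0 X) (comp0 D) /\ is_dv U (comp1 X) (comp1 D) /\
  is_dv U (comp2 X) (comp2 D) /\ is_dv U (comp3 X) (comp3 D).

(** Since x = z_u/sqrt E and y = z_v/sqrt G, the flat derivative along x
  (resp. y) of a field X is nabla'_x X = (1/sqrt E) X_u
  (resp. nabla'_y X = (1/sqrt G) X_v); the derivative formulas of the
  geometric frame are written accordingly, multiplied through by sqrt E
  (resp. sqrt G). *)

Definition fE (zu : vfield) : scal2 := fun u v => dot (zu u v) (zu u v).
Definition fF (zu zv : vfield) : scal2 := fun u v => dot (zu u v) (zv u v).
Definition fG (zv : vfield) : scal2 := fun u v => dot (zv u v) (zv u v).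

Definition lin2 (a : R) (X : vec4) (b : R) (Y : vec4) : vec4 :=
  vadd (vscale a X) (vscale b Y).

Definition semicanonical_geometric_frame (U : domain) (z zu zv : vfield)
  (x y n1 n2 : vfield) (nu mu gamma1 gamma2 beta1 beta2 : scal2) : Prop :=
  vsmooth U z /\ vis_du U z zu /\ vis_dv U z zv /\
  vsmooth U x /\ vsmooth U y /\ vsmooth U n1 /\ vsmooth U n2 /\
  smooth U nu /\ smooth U mu /\ smooth U gamma1 /\ smooth U gamma2 /\
  smooth U beta1 /\ smooth U beta2 /\
  (forall u v, U u v ->
     fE zu u v * fG zv u v - fF zu zv u v ^ 2 > 0 /\
     fF zu zv u v = 0 /\
     x u v = vscale (/ sqrt (fE zu u v)) (zu u v) /\
     y u v = vscale (/ sqrt (fG zv u v)) (zv u v) /\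
     dot (x u v) (x u v) = 1 /\ dot (y u v) (y u v) = 1 /\
     dot (n1 u v) (n1 u v) = 1 /\ dot (n2 u v) (n2 u v) = 1 /\
     dot (x u v) (y u v) = 0 /\ dot (x u v) (n1 u v) = 0 /\
     dot (x u v) (n2 u v) = 0 /\ dot (y u v) (n1 u v) = 0 /\
     dot (y u v) (n2 u v) = 0 /\ dot (n1 u v) (n2 u v) = 0 /\
     det4 (x u v) (y u v) (n1 u v) (n2 u v) > 0 /\
     mu u v > 0 /\ nu u v <> 0 /\ mu u v ^ 2 <> nu u v ^ 2) /\
  vis_du U x (fun u v => vscale (sqrt (fE zu u v))
                (lin2 (gamma1 u v) (y u v) (nu u v) (n1 u v))) /\
  vis_du U y (fun u v => vscale (sqrt (fE zu u v))
                (lin2 (- gamma1 u v) (x u v) (mu u v) (n2 u v))) /\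
  vis_dv U x (fun u v => vscale (sqrt (fG zv u v))
                (lin2 (- gamma2 u v) (y u v) (mu u v) (n2 u v))) /\
  vis_dv U y (fun u v => vscale (sqrt (fG zv u v))
                (lin2 (gamma2 u v) (x u v) (- nu u v) (n1 u v))) /\
  vis_du U n1 (fun u v => vscale (sqrt (fE zu u v))
                (lin2 (- nu u v) (x u v) (beta1 u v) (n2 u v))) /\
  vis_dv U n1 (fun u v => vscale (sqrt (fG zv u v))
                (lin2 (nu u v) (y u v) (beta2 u v) (n2 u v))) /\
  vis_du U n2 (fun u v => vscale (sqrt (fE zu u v))
                (lin2 (- mu u v) (y u v) (- beta1 u v) (n1 u v))) /\
  vis_dv U n2 (fun u v => vscale (sqrt (fG zv u v))
                (lin2 (- mu u v) (x u v) (- beta2 u v) (n1 u v))).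

(* In the geometric frame, sqrt G * mu = <v-derivative of x, n2> and
   sqrt G * nu = -<v-derivative of y, n1> are inner products of smooth fields,
   so the function H = G (Gmu^2 - Gnu^2) = G^2 (mu^2 - nu^2) can be
   differentiated in u by the product rule.  The mixed second derivatives
   z_uv, x_uv, y_uv exist and are symmetric (Schwarz); differentiating in v
   the orthogonality relations <y, z_u> = 0, <x_u, n2> = 0, <y_u, n1> = 0
   expresses their frame components through the invariants (compatibility
   relations).  With these, the u-derivative of H vanishes identically, so H
   is constant along every u-segment in U (mean value theorem), and the claim
   follows by taking square roots.  The relation holds for every geometric
   frame. *)

From Stdlib Require Import Reals Lra.
Open Scope R_scope.

Lemma Rabs_minus_diag_lt (a r : R) : 0 < r -> Rabs (a - a) < r.
Proof. intros Hr; rewrite Rminus_diag, Rabs_R0; exact Hr. Qed.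

Lemma derivable_pt_lim_local (f g : R -> R) (x l r : R) :
  0 < r -> (forall t, Rabs (t - x) < r -> f t = g t) ->
  derivable_pt_lim f x l -> derivable_pt_lim g x l.
Proof.
  intros Hr Hfg Hd eps Heps.
  destruct (Hd eps Heps) as [d Hdd].
  assert (Hdr : 0 < Rmin d r) by (apply Rmin_pos; [apply cond_pos | exact Hr]).
  exists (mkposreal _ Hdr); simpl; intros h Hh0 Hh.
  pose proof (Rmin_l d r); pose proof (Rmin_r d r).
  rewrite <- !Hfg.
  - apply Hdd; [exact Hh0 | lra].
  - apply Rabs_minus_diag_lt, Hr.
  - replace (x + h - x) with h by ring; lra.
Qed.

Lemma constant_on_segment (f : R -> R) (a b : R) :
  (forall t, Rmin a b <= t <= Rmax a b -> derivable_pt_lim f t 0) -> f a = f b.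
Proof.
  intros Hd.
  destruct (Rtotal_order a b) as [Hab | [-> | Hba]]; [| reflexivity |].
  - rewrite Rmin_left, Rmax_right in Hd by lra.
    destruct (MVT_cor2 f (fun _ => 0) a b Hab Hd) as [c [Hc _]]; lra.
  - rewrite Rmin_right, Rmax_left in Hd by lra.
    destruct (MVT_cor2 f (fun _ => 0) b a Hba Hd) as [c [Hc _]]; lra.
Qed.

(* The second difference of f over a square of side h contained in U equals
   h^2 times a mixed second derivative at some point of the square, whichever
   order of differentiation is used. *)
Section MixedDifference.

Variables (U : domain) (f : scal2) (u v h : R).
Hypothesis h_pos : 0 < h.
Hypothesis box_in_U : forall a b, u <= a <= u + h -> v <= b <= v + h -> U a b.

Let delta : R := f (u + h) (v + h) - f (u + h) v - f u (v + h) + f u v.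

Lemma mixed_difference_uv (fu fuv : scal2) :
  is_du U f fu -> is_dv U fu fuv ->
  exists s t, u <= s <= u + h /\ v <= t <= v + h /\ delta = fuv s t * (h * h).
Proof.
  intros Hfu Hfuv.
  destruct (MVT_cor2 (fun s => f s (v + h) - f s v)
              (fun s => fu s (v + h) - fu s v) u (u + h)) as [s [Es Hs]].
  { lra. }
  { intros c Hc; apply derivable_pt_lim_minus; apply Hfu, box_in_U; lra. }
  destruct (MVT_cor2 (fun t => fu s t) (fun t => fuv s t) v (v + h))
    as [t [Et Ht]].
  { lra. }
  { intros c Hc; apply Hfuv, box_in_U; lra. }
  exists s, t; do 2 (split; [lra |]).
  unfold delta; rewrite Et in Es; lra.
Qed.

Lemma mixed_difference_vu (fv fvu : scal2) :
  is_dv U f fv -> is_du U fv fvu ->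
  exists s t, u <= s <= u + h /\ v <= t <= v + h /\ delta = fvu s t * (h * h).
Proof.
  intros Hfv Hfvu.
  destruct (MVT_cor2 (fun t => f (u + h) t - f u t)
              (fun t => fv (u + h) t - fv u t) v (v + h)) as [t [Et Ht]].
  { lra. }
  { intros c Hc; apply derivable_pt_lim_minus; apply Hfv, box_in_U; lra. }
  destruct (MVT_cor2 (fun s => fv s t) (fun s => fvu s t) u (u + h))
    as [s [Es Hs]].
  { lra. }
  { intros c Hc; apply Hfvu, box_in_U; lra. }
  exists s, t; do 2 (split; [lra |]).
  unfold delta; rewrite Es in Et; lra.
Qed.

End MixedDifference.

Lemma schwarz (U : domain) (f fu fv fuv fvu : scal2) :
  open_dom U -> is_du U f fu -> is_dv U f fv ->
  is_dv U fu fuv -> is_du U fv fvu -> cont2_on U fuv -> cont2_on U fvu ->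
  forall u v, U u v -> fuv u v = fvu u v.
Proof.
  intros HO Hfu Hfv Hfuv Hfvu Cuv Cvu u v Huv.
  apply cond_eq; intros eps Heps.
  destruct (HO u v Huv) as [r [Hr HUr]].
  destruct (Cuv u v Huv (eps / 2)) as [d1 [Hd1 D1]]; [lra |].
  destruct (Cvu u v Huv (eps / 2)) as [d2 [Hd2 D2]]; [lra |].
  set (h := Rmin r (Rmin d1 d2) / 2).
  assert (Hmin : 0 < Rmin r (Rmin d1 d2)) by (repeat apply Rmin_pos; assumption).
  pose proof (Rmin_l r (Rmin d1 d2)); pose proof (Rmin_r r (Rmin d1 d2)).
  pose proof (Rmin_l d1 d2); pose proof (Rmin_r d1 d2).
  assert (h_pos : 0 < h) by (unfold h; lra).
  assert (near : forall a b, u <= a <= u + h -> v <= b <= v + h ->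
            U a b /\ Rabs (a - u) < Rmin r (Rmin d1 d2) /\
            Rabs (b - v) < Rmin r (Rmin d1 d2)).
  { intros a b Ha Hb.
    assert (Rabs (a - u) <= h) by (apply Rabs_le; lra).
    assert (Rabs (b - v) <= h) by (apply Rabs_le; lra).
    repeat split; [apply HUr | ..]; unfold h in *; lra. }
  assert (box : forall a b, u <= a <= u + h -> v <= b <= v + h -> U a b)
    by (intros a b Ha Hb; apply (near a b Ha Hb)).
  destruct (mixed_difference_uv U f u v h h_pos box fu fuv Hfu Hfuv)
    as [s1 [t1 [Hs1 [Ht1 E1]]]].
  destruct (mixed_difference_vu U f u v h h_pos box fv fvu Hfv Hfvu)
    as [s2 [t2 [Hs2 [Ht2 E2]]]].
  assert (same : fuv s1 t1 = fvu s2 t2).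
  { apply Rmult_eq_reg_r with (h * h); [congruence | nra]. }
  destruct (near s1 t1 Hs1 Ht1) as (U1 & A1 & B1).
  destruct (near s2 t2 Hs2 Ht2) as (U2 & A2 & B2).
  pose proof (Rabs_def2 _ _ (D1 s1 t1 U1 ltac:(lra) ltac:(lra))).
  pose proof (Rabs_def2 _ _ (D2 s2 t2 U2 ltac:(lra) ltac:(lra))).
  apply Rabs_def1; lra.
Qed.

Lemma is_du_unique (U : domain) (f g1 g2 : scal2) :
  is_du U f g1 -> is_du U f g2 -> forall u v, U u v -> g1 u v = g2 u v.
Proof. intros H1 H2 u v Huv; exact (uniqueness_limite _ _ _ _ (H1 u v Huv) (H2 u v Huv)). Qed.

Lemma is_dv_unique (U : domain) (f g1 g2 : scal2) :
  is_dv U f g1 -> is_dv U f g2 -> forall u v, U u v -> g1 u v = g2 u v.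
Proof. intros H1 H2 u v Huv; exact (uniqueness_limite _ _ _ _ (H1 u v Huv) (H2 u v Huv)). Qed.

Lemma is_du_local (U : domain) (f g w : scal2) :
  open_dom U -> (forall u v, U u v -> f u v = g u v) -> is_du U f w -> is_du U g w.
Proof.
  intros HO Hfg Hd u v Huv; destruct (HO u v Huv) as [r [Hr HUr]].
  apply (derivable_pt_lim_local (fun t => f t v) _ _ _ r Hr); [| exact (Hd u v Huv)].
  intros t Ht; apply Hfg, HUr; [exact Ht | apply Rabs_minus_diag_lt, Hr].
Qed.

Lemma is_dv_local (U : domain) (f g w : scal2) :
  open_dom U -> (forall u v, U u v -> f u v = g u v) -> is_dv U f w -> is_dv U g w.
Proof.
  intros HO Hfg Hd u v Huv; destruct (HO u v Huv) as [r [Hr HUr]].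
  apply (derivable_pt_lim_local (fun t => f u t) _ _ _ r Hr); [| exact (Hd u v Huv)].
  intros t Ht; apply Hfg, HUr; [apply Rabs_minus_diag_lt, Hr | exact Ht].
Qed.

Lemma smooth_mixed_partials (U : domain) (f fu fv : scal2) :
  open_dom U -> smooth U f -> is_du U f fu -> is_dv U f fv ->
  exists w, is_dv U fu w /\ is_du U fv w.
Proof.
  intros HO Hs Hu Hv.
  destruct (Hs 2%nat) as [_ [fu' [fv' [Hu' [Hv' [Cu Cv]]]]]].
  destruct Cu as [_ [_ [fuv [_ [Hfuv [_ Cuv]]]]]].
  destruct Cv as [_ [fvu [_ [Hfvu [_ [Cvu _]]]]]].
  pose proof (schwarz U f fu' fv' fuv fvu HO Hu' Hv' Hfuv Hfvu Cuv Cvu) as Sym.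
  exists fuv; split.
  - apply (is_dv_local U fu'); [exact HO | | exact Hfuv].
    exact (is_du_unique U f fu' fu Hu' Hu).
  - apply (is_du_local U fv'); [exact HO | exact (is_dv_unique U f fv' fv Hv' Hv) |].
    intros u v Huv; rewrite Sym by exact Huv; exact (Hfvu u v Huv).
Qed.

Lemma vsmooth_mixed_partials (U : domain) (X Xu Xv : vfield) :
  open_dom U -> vsmooth U X -> vis_du U X Xu -> vis_dv U X Xv ->
  exists W, vis_dv U Xu W /\ vis_du U Xv W.
Proof.
  intros HO [S0 [S1 [S2 S3]]] [U0 [U1 [U2 U3]]] [V0 [V1 [V2 V3]]].
  destruct (smooth_mixed_partials U _ _ _ HO S0 U0 V0) as [w0 [A0 B0]].
  destruct (smooth_mixed_partials U _ _ _ HO S1 U1 V1) as [w1 [A1 B1]].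
  destruct (smooth_mixed_partials U _ _ _ HO S2 U2 V2) as [w2 [A2 B2]].
  destruct (smooth_mixed_partials U _ _ _ HO S3 U3 V3) as [w3 [A3 B3]].
  exists (fun u v => mkV (w0 u v) (w1 u v) (w2 u v) (w3 u v)).
  unfold vis_dv, vis_du, comp0, comp1, comp2, comp3; simpl; tauto.
Qed.

Definition vderiv (A : R -> vec4) (a : vec4) (t : R) : Prop :=
  derivable_pt_lim (fun s => c0 (A s)) t (c0 a) /\
  derivable_pt_lim (fun s => c1 (A s)) t (c1 a) /\
  derivable_pt_lim (fun s => c2 (A s)) t (c2 a) /\
  derivable_pt_lim (fun s => c3 (A s)) t (c3 a).

Lemma vis_du_at (U : domain) (X D : vfield) (u v : R) :
  vis_du U X D -> U u v -> vderiv (fun s => X s v) (D u v) u.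
Proof. intros (H0 & H1 & H2 & H3) Huv; repeat split; [apply H0 | apply H1 | apply H2 | apply H3]; exact Huv. Qed.

Lemma vis_dv_at (U : domain) (X D : vfield) (u v : R) :
  vis_dv U X D -> U u v -> vderiv (fun s => X u s) (D u v) v.
Proof. intros (H0 & H1 & H2 & H3) Huv; repeat split; [apply H0 | apply H1 | apply H2 | apply H3]; exact Huv. Qed.

Lemma dot_derivable (A B : R -> vec4) (a b : vec4) (t : R) :
  vderiv A a t -> vderiv B b t ->
  derivable_pt_lim (fun s => dot (A s) (B s)) t (dot a (B t) + dot (A t) b).
Proof.
  intros (A0 & A1 & A2 & A3) (B0 & B1 & B2 & B3).
  pose proof (derivable_pt_lim_plus _ _ _ _ _
    (derivable_pt_lim_plus _ _ _ _ _
      (derivable_pt_lim_plus _ _ _ _ _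
        (derivable_pt_lim_mult _ _ _ _ _ A0 B0) (derivable_pt_lim_mult _ _ _ _ _ A1 B1))
      (derivable_pt_lim_mult _ _ _ _ _ A2 B2))
    (derivable_pt_lim_mult _ _ _ _ _ A3 B3)) as D.
  unfold dot; unfold plus_fct, mult_fct in D.
  match type of D with derivable_pt_lim _ _ ?l => replace (_ + _) with l by ring end.
  exact D.
Qed.

Lemma orthogonal_dv (U : domain) (A B Av Bv : vfield) (u v : R) :
  open_dom U -> vis_dv U A Av -> vis_dv U B Bv ->
  (forall a b, U a b -> dot (A a b) (B a b) = 0) -> U u v ->
  dot (Av u v) (B u v) + dot (A u v) (Bv u v) = 0.
Proof.
  intros HO HA HB Horth Huv; destruct (HO u v Huv) as [r [Hr HUr]].
  apply (uniqueness_limite (fun s => dot (A u s) (B u s)) v).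
  - exact (dot_derivable _ _ _ _ _ (vis_dv_at U A Av u v HA Huv) (vis_dv_at U B Bv u v HB Huv)).
  - apply (derivable_pt_lim_local (fct_cte 0) _ _ _ r Hr); [| apply derivable_pt_lim_const].
    intros t Ht; symmetry; apply Horth, HUr; [apply Rabs_minus_diag_lt, Hr | exact Ht].
Qed.

Lemma dot_sym (a b : vec4) : dot a b = dot b a.
Proof. unfold dot; ring. Qed.
Lemma dot_scale_l (k : R) (a b : vec4) : dot (vscale k a) b = k * dot a b.
Proof. unfold dot, vscale; simpl; ring. Qed.
Lemma dot_scale_r (k : R) (a b : vec4) : dot a (vscale k b) = k * dot a b.
Proof. unfold dot, vscale; simpl; ring. Qed.
Lemma dot_lin2_l (a b : R) (X Y Z : vec4) : dot (lin2 a X b Y) Z = a * dot X Z + b * dot Y Z.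
Proof. unfold dot, lin2, vadd, vscale; simpl; ring. Qed.
Lemma dot_lin2_r (a b : R) (X Y Z : vec4) : dot Z (lin2 a X b Y) = a * dot Z X + b * dot Z Y.
Proof. unfold dot, lin2, vadd, vscale; simpl; ring. Qed.
Lemma dot_self_nonneg (a : vec4) : 0 <= dot a a.
Proof. unfold dot; nra. Qed.

Lemma unit_normalization (a b : vec4) :
  a = vscale (/ sqrt (dot b b)) b -> dot a a = 1 -> b = vscale (sqrt (dot b b)) a.
Proof.
  intros -> Hunit.
  rewrite dot_scale_l, dot_scale_r in Hunit.
  assert (Hs : sqrt (dot b b) <> 0) by (intros H0; rewrite H0, Rinv_0 in Hunit; lra).
  destruct b; unfold vscale; simpl; f_equal; field; exact Hs.
Qed.

(* Turns G sqrt|m| into sqrt|G^2 m|, the form in which the constant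
   function appears. *)
Lemma sqrt_abs_scale (g m : R) : 0 <= g -> g * sqrt (Rabs m) = sqrt (Rabs (g ^ 2 * m)).
Proof.
  intros Hg.
  rewrite Rabs_mult, (Rabs_right (g ^ 2)) by (apply Rle_ge, pow2_ge_0).
  rewrite sqrt_mult_alt by apply pow2_ge_0.
  rewrite <- Rsqr_pow2, sqrt_Rsqr by exact Hg; reflexivity.
Qed.

Definition orthonormal4 (a b c d : vec4) : Prop :=
  dot a a = 1 /\ dot b b = 1 /\ dot c c = 1 /\ dot d d = 1 /\
  dot a b = 0 /\ dot a c = 0 /\ dot a d = 0 /\
  dot b c = 0 /\ dot b d = 0 /\ dot c d = 0.

Ltac expand_dots :=
  repeat first [rewrite dot_scale_l | rewrite dot_scale_r
               | rewrite dot_lin2_l | rewrite dot_lin2_r].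

Ltac orthonormal_dots H :=
  lazymatch type of H with
  | orthonormal4 ?a ?b ?c ?d =>
      let E := fresh in
      pose proof H as E;
      destruct E as (Eaa & Ebb & Ecc & Edd & Eab & Eac & Ead & Ebc & Ebd & Ecd);
      rewrite ?(dot_sym b a), ?(dot_sym c a), ?(dot_sym d a),
              ?(dot_sym c b), ?(dot_sym d b), ?(dot_sym d c);
      rewrite ?Eaa, ?Ebb, ?Ecc, ?Edd, ?Eab, ?Eac, ?Ead, ?Ebc, ?Ebd, ?Ecd;
      clear Eaa Ebb Ecc Edd Eab Eac Ead Ebc Ebd Ecd
  end.

Section GeometricFrame.

Variables (U : domain) (z zu zv x y n1 n2 : vfield)
  (nu mu gamma1 gamma2 beta1 beta2 : scal2).

Let sE (u v : R) : R := sqrt (fE zu u v).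
Let sG (u v : R) : R := sqrt (fG zv u v).

Let xu (u v : R) : vec4 := vscale (sE u v) (lin2 (gamma1 u v) (y u v) (nu u v) (n1 u v)).
Let yu (u v : R) : vec4 := vscale (sE u v) (lin2 (- gamma1 u v) (x u v) (mu u v) (n2 u v)).
Let xv (u v : R) : vec4 := vscale (sG u v) (lin2 (- gamma2 u v) (y u v) (mu u v) (n2 u v)).
Let yv (u v : R) : vec4 := vscale (sG u v) (lin2 (gamma2 u v) (x u v) (- nu u v) (n1 u v)).
Let n1u (u v : R) : vec4 := vscale (sE u v) (lin2 (- nu u v) (x u v) (beta1 u v) (n2 u v)).
Let n1v (u v : R) : vec4 := vscale (sG u v) (lin2 (nu u v) (y u v) (beta2 u v) (n2 u v)).
Let n2u (u v : R) : vec4 := vscale (sE u v) (lin2 (- mu u v) (y u v) (- beta1 u v) (n1 u v)).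
Let n2v (u v : R) : vec4 := vscale (sG u v) (lin2 (- mu u v) (x u v) (- beta2 u v) (n1 u v)).

Hypothesis U_open : open_dom U.
Hypotheses (z_smooth : vsmooth U z) (x_smooth : vsmooth U x) (y_smooth : vsmooth U y).
Hypotheses (z_du : vis_du U z zu) (z_dv : vis_dv U z zv).
Hypotheses (x_du : vis_du U x xu) (y_du : vis_du U y yu)
  (x_dv : vis_dv U x xv) (y_dv : vis_dv U y yv)
  (n1_du : vis_du U n1 n1u) (n1_dv : vis_dv U n1 n1v)
  (n2_du : vis_du U n2 n2u) (n2_dv : vis_dv U n2 n2v).
Hypothesis frame_at : forall u v : R, U u v ->
  x u v = vscale (/ sqrt (fE zu u v)) (zu u v) /\
  y u v = vscale (/ sqrt (fG zv u v)) (zv u v) /\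
  orthonormal4 (x u v) (y u v) (n1 u v) (n2 u v).

Lemma frame_orthonormal (u v : R) : U u v -> orthonormal4 (x u v) (y u v) (n1 u v) (n2 u v).
Proof. intros Huv; apply (frame_at u v Huv). Qed.

Lemma zu_in_frame (u v : R) : U u v -> zu u v = vscale (sE u v) (x u v).
Proof.
  intros Huv; destruct (frame_at u v Huv) as (Hx & _ & Hxx & _).
  exact (unit_normalization _ _ Hx Hxx).
Qed.

Lemma zv_in_frame (u v : R) : U u v -> zv u v = vscale (sG u v) (y u v).
Proof.
  intros Huv; destruct (frame_at u v Huv) as (_ & Hy & _ & Hyy & _).
  exact (unit_normalization _ _ Hy Hyy).
Qed.

Lemma sG_squared (u v : R) : sG u v * sG u v = fG zv u v.
Proof. apply sqrt_sqrt, dot_self_nonneg. Qed.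

(* Compatibility relations, obtained by differentiating in v the
   orthogonality relations <y, z_u> = 0, <x_u, n2> = 0 and <y_u, n1> = 0:
   they give the components of the mixed derivatives z_uv, x_uv, y_uv that
   enter the u-derivatives below.  In the paper's notation the first one is
   gamma2 = -x(ln sqrt G). *)
Lemma compatibility_z (W : vfield) (u v : R) : vis_dv U zu W -> U u v ->
  dot (y u v) (W u v) = - (sE u v * sG u v * gamma2 u v).
Proof.
  intros HW Huv; pose proof (frame_orthonormal u v Huv) as On.
  assert (Horth : forall a b, U a b -> dot (y a b) (zu a b) = 0).
  { intros a b Hab; pose proof (frame_orthonormal a b Hab) as On'.
    rewrite zu_in_frame by exact Hab; expand_dots; orthonormal_dots On'; ring. }
  pose proof (orthogonal_dv U y zu yv W u v U_open y_dv HW Horth Huv) as E.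
  rewrite zu_in_frame in E by exact Huv; revert E; unfold yv.
  expand_dots; orthonormal_dots On; intros E; lra.
Qed.


Lemma compatibility_x (W : vfield) (u v : R) : vis_dv U xu W -> U u v ->
  dot (W u v) (n2 u v) = sE u v * sG u v * nu u v * beta2 u v.
Proof.
  intros HW Huv; pose proof (frame_orthonormal u v Huv) as On.
  assert (Horth : forall a b, U a b -> dot (xu a b) (n2 a b) = 0).
  { intros a b Hab; pose proof (frame_orthonormal a b Hab) as On'.
    unfold xu; expand_dots; orthonormal_dots On'; ring. }
  pose proof (orthogonal_dv U xu n2 W n2v u v U_open HW n2_dv Horth Huv) as E.
  revert E; unfold xu, n2v; expand_dots; orthonormal_dots On; intros E; lra.
Qed.

Lemma compatibility_y (W : vfield) (u v : R) : vis_dv U yu W -> U u v ->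
  dot (W u v) (n1 u v) = - (sE u v * sG u v * mu u v * beta2 u v).
Proof.
  intros HW Huv; pose proof (frame_orthonormal u v Huv) as On.
  assert (Horth : forall a b, U a b -> dot (yu a b) (n1 a b) = 0).
  { intros a b Hab; pose proof (frame_orthonormal a b Hab) as On'.
    unfold yu; expand_dots; orthonormal_dots On'; ring. }
  pose proof (orthogonal_dv U yu n1 W n1v u v U_open HW n1_dv Horth Huv) as E.
  revert E; unfold yu, n1v; expand_dots; orthonormal_dots On; intros E; lra.
Qed.

Let Gmu (u v : R) : R := dot (xv u v) (n2 u v).
Let Gnu (u v : R) : R := - dot (yv u v) (n1 u v).

Lemma Gmu_value (u v : R) : U u v -> Gmu u v = sG u v * mu u v.
Proof.
  intros Huv; pose proof (frame_orthonormal u v Huv) as On.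
  unfold Gmu, xv; expand_dots; orthonormal_dots On; ring.
Qed.

Lemma Gnu_value (u v : R) : U u v -> Gnu u v = sG u v * nu u v.
Proof.
  intros Huv; pose proof (frame_orthonormal u v Huv) as On.
  unfold Gnu, yv; expand_dots; orthonormal_dots On; ring.
Qed.

(* u-derivatives: G_u = -2 sqrt E G gamma2, (sqrt G mu)_u and (sqrt G nu)_u.
   Each uses the symmetry of the corresponding mixed derivative. *)
Lemma G_du (u v : R) : U u v ->
  derivable_pt_lim (fun t => fG zv t v) u (- 2 * sE u v * fG zv u v * gamma2 u v).
Proof.
  intros Huv; pose proof (frame_orthonormal u v Huv) as On.
  destruct (vsmooth_mixed_partials U z zu zv U_open z_smooth z_du z_dv) as [W [Wv Wu]].
  pose proof (vis_du_at U zv W u v Wu Huv) as D.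
  pose proof (dot_derivable _ _ _ _ u D D) as DG.
  match type of DG with derivable_pt_lim _ _ ?l => replace (_ * _) with l end.
  { exact DG. }
  rewrite <- sG_squared, (dot_sym (W u v)), zv_in_frame by exact Huv.
  expand_dots; rewrite (compatibility_z W u v Wv Huv); ring.
Qed.

Lemma Gmu_du (u v : R) : U u v ->
  derivable_pt_lim (fun t => Gmu t v) u
    (sE u v * sG u v * (nu u v * beta2 u v + gamma2 u v * mu u v)).
Proof.
  intros Huv; pose proof (frame_orthonormal u v Huv) as On.
  destruct (vsmooth_mixed_partials U x xu xv U_open x_smooth x_du x_dv) as [W [Wv Wu]].
  pose proof (dot_derivable _ _ _ _ u (vis_du_at U xv W u v Wu Huv)
                (vis_du_at U n2 n2u u v n2_du Huv)) as D.
  match type of D with derivable_pt_lim _ _ ?l => replace (_ * _) with l end.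
  { exact D. }
  rewrite (compatibility_x W u v Wv Huv).
  unfold xv, n2u; expand_dots; orthonormal_dots On; ring.
Qed.

Lemma Gnu_du (u v : R) : U u v ->
  derivable_pt_lim (fun t => Gnu t v) u
    (sE u v * sG u v * (mu u v * beta2 u v + gamma2 u v * nu u v)).
Proof.
  intros Huv; pose proof (frame_orthonormal u v Huv) as On.
  destruct (vsmooth_mixed_partials U y yu yv U_open y_smooth y_du y_dv) as [W [Wv Wu]].
  pose proof (derivable_pt_lim_opp _ _ _
    (dot_derivable _ _ _ _ u (vis_du_at U yv W u v Wu Huv)
       (vis_du_at U n1 n1u u v n1_du Huv))) as D.
  match type of D with derivable_pt_lim _ _ ?l => replace (_ * _) with l end.
  { exact D. }
  rewrite (compatibility_y W u v Wv Huv).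
  unfold yv, n1u; expand_dots; orthonormal_dots On; ring.
Qed.


Let H (u v : R) : R := fG zv u v * (Gmu u v * Gmu u v - Gnu u v * Gnu u v).

Lemma H_value (u v : R) : U u v -> H u v = fG zv u v ^ 2 * (mu u v ^ 2 - nu u v ^ 2).
Proof.
  intros Huv; unfold H; rewrite Gmu_value, Gnu_value by exact Huv.
  rewrite <- sG_squared; ring.
Qed.

Lemma H_du (u v : R) : U u v -> derivable_pt_lim (fun t => H t v) u 0.
Proof.
  intros Huv.
  pose proof (Gmu_du u v Huv) as Dmu; pose proof (Gnu_du u v Huv) as Dnu.
  pose proof (derivable_pt_lim_mult _ _ _ _ _ (G_du u v Huv)
    (derivable_pt_lim_minus _ _ _ _ _
      (derivable_pt_lim_mult _ _ _ _ _ Dmu Dmu)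
      (derivable_pt_lim_mult _ _ _ _ _ Dnu Dnu))) as D.
  match type of D with derivable_pt_lim _ _ ?l => replace 0 with l end.
  { exact D. }
  unfold mult_fct, minus_fct; rewrite Gmu_value, Gnu_value by exact Huv.
  rewrite <- sG_squared; ring.
Qed.

Lemma G2_mu2_nu2_independent_of_u (u1 u2 v : R) :
  (forall t, Rmin u1 u2 <= t <= Rmax u1 u2 -> U t v) ->
  fG zv u1 v ^ 2 * (mu u1 v ^ 2 - nu u1 v ^ 2)
  = fG zv u2 v ^ 2 * (mu u2 v ^ 2 - nu u2 v ^ 2).
Proof.
  intros Hseg.
  rewrite <- !H_value by (apply Hseg; split;
    [apply Rmin_l || apply Rmin_r | apply Rmax_l || apply Rmax_r]).
  apply (constant_on_segment (fun t => H t v)); intros t Ht.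
  exact (H_du t v (Hseg t Ht)).
Qed.

End GeometricFrame.

Theorem lemma7p1 (U : domain) (z zu zv x y n1 n2 : vfield)
  (nu mu gamma1 gamma2 beta1 beta2 : scal2) :
  open_dom U ->
  semicanonical_geometric_frame U z zu zv x y n1 n2
    nu mu gamma1 gamma2 beta1 beta2 ->
  (forall u v, U u v -> gamma1 u v = 0) ->
  forall u1 u2 v,
    (forall t, Rmin u1 u2 <= t <= Rmax u1 u2 -> U t v) ->
    fG zv u1 v * sqrt (Rabs (mu u1 v ^ 2 - nu u1 v ^ 2))
    = fG zv u2 v * sqrt (Rabs (mu u2 v ^ 2 - nu u2 v ^ 2)).
Proof.
  intros U_open Hframe _ u1 u2 v Hseg.
  destruct Hframe as (Sz & Dzu & Dzv & Sx & Sy & _ & _ & _ & _ & _ & _ & _ & _ &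
    Hpoint & Dxu & Dyu & Dxv & Dyv & Dn1u & Dn1v & Dn2u & Dn2v).
  assert (frame_at : forall a b, U a b ->
    x a b = vscale (/ sqrt (fE zu a b)) (zu a b) /\
    y a b = vscale (/ sqrt (fG zv a b)) (zv a b) /\
    orthonormal4 (x a b) (y a b) (n1 a b) (n2 a b)).
  { intros a b Hab.
    destruct (Hpoint a b Hab) as (_ & _ & Hx & Hy & O1 & O2 & O3 & O4 & O5 & O6 &
      O7 & O8 & O9 & O10 & _).
    unfold orthonormal4; tauto. }
  rewrite !sqrt_abs_scale by apply dot_self_nonneg.
  do 2 f_equal.
  exact (G2_mu2_nu2_independent_of_u U z zu zv x y n1 n2 nu mu gamma1 gamma2
    beta1 beta2 U_open Sz Sx Sy Dzu Dzv Dxu Dyu Dxv Dyv Dn1u Dn1v Dn2u Dn2v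
    frame_at u1 u2 v Hseg).
Qed.
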